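(* Write $V(b,\epsilon)=\sup_{\sigma,\sigma'\ge0}D_{b,\epsilon}(\sigma,\sigma')$. For $\theta\in\mathbb{R}^m$ let $\theta^+=\max(\theta,0)$ and $\theta^-=\max(-\theta,0)$ (entrywise). Then $$-V(b,\epsilon)=\inf_{\theta\in\mathbb{R}^m}\Big[-\eta\cdot\log g^{(\theta)}+\big(b^*-(b-\epsilon)\big)\cdot\theta^+ +\big(b+\epsilon-b^*\big)\cdot\theta^-\Big],$$ where all the coefficient vectors $b^*-(b-\epsilon)$ and $b+\epsilon-b^*$ are entrywise nonnegative. If $(\sigma,\sigma')$ attains $\sup D_{b,\epsilon}$, then $\theta^{bf}=\sigma'-\sigma$ attains the infimum on the right. Moreover, for every $\theta\in\mathbb{R}^m$ and $i\in[n]$, $A_i^\top\theta=T_\theta\widehat x_i$, so $g^{(\theta)}_i$ is the softmax of $T_\theta\widehat x_i$.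
   Context: Standard setup. Let $n\ge1$, $k\ge2$, $p\ge1$ be integers and $m=p+k$. There are $n$ data points $x_1,\dots,x_n$ and $p$ rules $h^{(1)},\dots,h^{(p)}$, each a map from $\{x_1,\dots,x_n\}$ to $\{1,\dots,k\}\cup\{?\}$, where ''?'' means abstain. Let $n_j\ge1$ be the number of indices $i$ with $h^{(j)}(x_i)\neq ?$. $\Delta_k$ denotes the probability simplex in $\mathbb{R}^k$; an element $z\in\Delta_k^n\subset\mathbb{R}^{nk}$ is written $z=(z_1,\dots,z_n)$ with $z_i=(z_{i1},\dots,z_{ik})\in\Delta_k$. For $j\le p$ let $h^{(j)}\in\{0,1\}^{nk}$ also denote the vector with $h^{(j)}_{i\ell}=1$ iff $h^{(j)}(x_i)=\ell$; for $\ell\le k$ let $\vec e^{\,n}_\ell\in\{0,1\}^{nk}$ have entries $(\vec e^{\,n}_\ell)_{i\ell'}=\mathbf 1(\ell'=\ell)$. The matrix $A\in\mathbb{R}^{m\times nk}$ has rows $a^{(j)}=h^{(j)}/n_j$ for $1\le j\le p$ and $a^{(p+\ell)}=\vec e^{\,n}_\ell/n$ for $1\le\ell\le k$. For $\theta\in\mathbb{R}^m$ put $a^{(\theta)}=A^\top\theta\in\mathbb{R}^{nk}$ (entries $a^{(\theta)}_{i\ell}$) and define $g^{(\theta)}\in\Delta_k^n$ by $g^{(\theta)}_{i\ell}=\exp(a^{(\theta)}_{i\ell})/\sum_{\ell'=1}^k\exp(a^{(\theta)}_{i\ell'})$; let $\mathcal G=\{g^{(\theta)}:\theta\in\mathbb{R}^m\}$.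 A fixed ''true labeling'' $\eta\in\Delta_k^n$ is given and $b^*:=A\eta\in\mathbb{R}^m$. Given $b\in\mathbb{R}^m$ and $\epsilon\in\mathbb{R}^m$ with $\epsilon\ge0$ and $b-\epsilon\le b^*\le b+\epsilon$ (entrywise), let $P=\{z\in\Delta_k^n:\ b-\epsilon\le Az\le b+\epsilon\}$ (entrywise). Logarithms act entrywise; $z\cdot\log g=\sum_{i,\ell}z_{i\ell}\log g_{i\ell}$ with conventions $0\log 0=0$, $\log 0=-\infty$. Dual function: for $\sigma,\sigma'\in\mathbb{R}^m_{\ge0}$, $D_{b,\epsilon}(\sigma,\sigma')=(\sigma'-\sigma)\cdot b-(\sigma'+\sigma)\cdot\epsilon-\sum_{i=1}^n\log\big(\sum_{\ell=1}^k\exp(a^{(\sigma'-\sigma)}_{i\ell})\big)$. For $i\in[n]$, $A_i\in\mathbb{R}^{m\times k}$ denotes the submatrix of $A$ formed by columns $k(i-1)+1,\dots,ki$; $\widehat x_i\in\mathbb{R}^{mk}$ is $A_i$ flattened in row-major order (its $((j-1)k+\ell)$-th entry is the $(j,\ell)$ entry of $A_i$); and $T_\theta=(\theta_1 I_k,\theta_2I_k,\dots,\theta_mI_k)\in\mathbb{R}^{k\times mk}$, with $I_k$ the $k\times k$ identity. *)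

From HB Require Import structures.
From mathcomp Require Import all_boot all_order all_algebra.
From mathcomp Require Import all_classical all_reals.
From mathcomp Require Import ereal topology normedtype sequences exp.
Set Implicit Arguments. Unset Strict Implicit. Unset Printing Implicit Defensive.
Import Order.TTheory GRing.Theory Num.Theory.
Local Open Scope ring_scope.

(* Vectors of R^{nk} are represented as n x k matrices z with z i l = z_{il};
   i.e. the paper's column k(i-1)+l is the pair (i,l).
   Rules h^(j), j < p, are maps 'I_n -> option 'I_k (None = abstain "?").
   Row indices of A are 'I_(p+k): the first p are rule rows, the last k
   are the class rows a^{(p+l)} (split via fintype.split). *)


Lemma ord_div_lt (m k : nat) (t : 'I_(m * k)) : (t %/ k < m)%N.
Proof.
have Ht := ltn_ord t; move: (nat_of_ord t) Ht => x; clear t.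
case: k => [|k]; first by rewrite muln0.
by move=> Ht; rewrite ltn_divLR.
Qed.

Lemma ord_mod_lt (m k : nat) (t : 'I_(m * k)) : (t %% k < k)%N.
Proof.
have Ht := ltn_ord t; move: (nat_of_ord t) Ht => x; clear t.
case: k => [|k]; first by rewrite muln0.
by move=> _; rewrite ltn_mod.
Qed.

Definition ordq (m k : nat) (t : 'I_(m * k)) : 'I_m := Ordinal (ord_div_lt t).
Definition ordr (m k : nat) (t : 'I_(m * k)) : 'I_k := Ordinal (ord_mod_lt t).

Section Defs.
Variables (R : realType) (n k p : nat) (h : 'I_p -> 'I_n -> option 'I_k).

Definition nrule (j : 'I_p) : nat := #|[set i : 'I_n | h j i != None]|.

Definition hvec (j : 'I_p) : 'M[R]_(n, k) :=
  \matrix_(i, l) (if h j i == Some l then 1 else 0).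

Definition evec (l : 'I_k) : 'M[R]_(n, k) :=
  \matrix_(i, l') (if l' == l then 1 else 0).

Definition Arow (j : 'I_(p + k)) : 'M[R]_(n, k) :=
  match fintype.split j with
  | inl j' => (nrule j')%:R^-1 *: hvec j'
  | inr l => (n%:R)^-1 *: evec l
  end.

Definition Aapp (z : 'M[R]_(n, k)) : 'cV[R]_(p + k) :=
  \col_j \sum_(i < n) \sum_(l < k) Arow j i l * z i l.

Definition Atheta (theta : 'cV[R]_(p + k)) : 'M[R]_(n, k) :=
  \matrix_(i, l) \sum_(j < p + k) theta j 0 * Arow j i l.

Definition gtheta (theta : 'cV[R]_(p + k)) : 'M[R]_(n, k) :=
  \matrix_(i, l) (expR (Atheta theta i l) /
                  \sum_(l' < k) expR (Atheta theta i l')).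

Definition in_simplex_n (z : 'M[R]_(n, k)) : Prop :=
  (forall i l, 0 <= z i l) /\ (forall i, \sum_(l < k) z i l = 1).

Definition dotv (u v : 'cV[R]_(p + k)) : R := \sum_(j < p + k) u j 0 * v j 0.

Definition Ddual (b eps sigma sigma' : 'cV[R]_(p + k)) : R :=
  dotv (sigma' - sigma) b - dotv (sigma' + sigma) eps
  - \sum_(i < n) ln (\sum_(l < k) expR (Atheta (sigma' - sigma) i l)).

Definition nonneg_vec (v : 'cV[R]_(p + k)) : Prop := forall j, 0 <= v j 0.

Definition Vval (b eps : 'cV[R]_(p + k)) : \bar R :=
  ereal_sup [set (Ddual b eps s s')%:E |
             s in [set s | nonneg_vec s] & s' in [set s' | nonneg_vec s']]%classic.

Definition posp (theta : 'cV[R]_(p + k)) : 'cV[R]_(p + k) :=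
  \col_j Num.max (theta j 0) 0.
Definition negp (theta : 'cV[R]_(p + k)) : 'cV[R]_(p + k) :=
  \col_j Num.max (- theta j 0) 0.

Definition Fobj (eta : 'M[R]_(n, k)) (b eps theta : 'cV[R]_(p + k)) : R :=
  - (\sum_(i < n) \sum_(l < k) eta i l * ln (gtheta theta i l))
  + dotv (Aapp eta - (b - eps)) (posp theta)
  + dotv (b + eps - Aapp eta) (negp theta).

Definition Ablock (i : 'I_n) : 'M[R]_(p + k, k) := \matrix_(j, l) Arow j i l.

(* \hat x_i : A_i flattened row-major; entry (j-1)k+l is A_i(j,l) *)
Definition xhat (i : 'I_n) : 'cV[R]_((p + k) * k) :=
  \col_(t < (p + k) * k) Ablock i (ordq t) (ordr t).

(* T_theta = (theta_1 I_k, ..., theta_m I_k) *)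
Definition Tmat (theta : 'cV[R]_(p + k)) : 'M[R]_(k, (p + k) * k) :=
  \matrix_(l, t) (theta (ordq t) 0 * (if ordr t == l then 1 else 0)).

Definition softmax (v : 'cV[R]_k) : 'cV[R]_k :=
  \col_l (expR (v l 0) / \sum_(l' < k) expR (v l' 0)).

End Defs.

From HB Require Import structures.
From mathcomp Require Import all_boot all_order all_algebra.
From mathcomp Require Import all_classical all_reals.
From mathcomp Require Import ereal topology normedtype sequences exp.
From mathcomp Require Import ring lra.
Import Order.TTheory GRing.Theory Num.Theory.
Local Open Scope ring_scope.

(* Since the rows of [eta] sum to one, its cross-entropy against [g^(theta)]
   is [theta . A eta] minus the log-partition function, and the [A eta]-parts
   of the two hinge terms cancel it: the primal objective is the log-partition
   function minus [theta . b] plus [eps . |theta|].  The dual function at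
   [(sigma, sigma')] is minus this objective at [theta = sigma' - sigma], up to
   the nonnegative term [eps . (sigma' + sigma - |sigma' - sigma|)], which
   vanishes at [(sigma, sigma') = (theta^-, theta^+)].  So the dual supremum is
   minus the primal infimum and a dual maximiser gives a primal minimiser.
   The bounds [b - eps <= A eta <= b + eps] only serve the signs of the
   coefficient vectors. *)

Section PosNegParts.
Context {R : realDomainType}.

Lemma max0_sub (t : R) : Num.max t 0 - Num.max (- t) 0 = t.
Proof. by rewrite /Order.max; case: ltrP => ?; case: ltrP => ?; lra. Qed.

Lemma max0_add (t : R) : Num.max t 0 + Num.max (- t) 0 = `|t|.
Proof.
rewrite /Order.max; case: ltrP => ?; case: ltrP => ?;
  first [rewrite ger0_norm; lra | rewrite ltr0_norm; lra].
Qed.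

Lemma max0_ge0 (t : R) : 0 <= Num.max t 0.
Proof. by rewrite le_max lexx orbT. Qed.

Lemma normB_le_add (s s' : R) : 0 <= s -> 0 <= s' -> `|s' - s| <= s' + s.
Proof. by move=> s0 s'0; rewrite (le_trans (ler_normB _ _)) // !ger0_norm. Qed.

End PosNegParts.

Section Duality.
Variables (R : realType) (n k p : nat) (h : 'I_p -> 'I_n -> option 'I_k).
Hypothesis k_gt0 : (0 < k)%N.

Definition logpart (theta : 'cV[R]_(p + k)) : R :=
  \sum_(i < n) ln (\sum_(l < k) expR (Atheta h theta i l)).

Lemma sum_expR_Atheta_gt0 (theta : 'cV[R]_(p + k)) i :
  0 < \sum_(l < k) expR (Atheta h theta i l).
Proof.
rewrite (bigD1 (Ordinal k_gt0)) //=.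
by rewrite ltr_wpDr ?expR_gt0 // sumr_ge0 // => l _; rewrite expR_ge0.
Qed.

Lemma ln_gtheta (theta : 'cV[R]_(p + k)) i l :
  ln (gtheta h theta i l) =
  Atheta h theta i l - ln (\sum_(l' < k) expR (Atheta h theta i l')).
Proof.
by rewrite mxE lnM ?expRK ?lnV ?posrE ?invr_gt0 ?expR_gt0 ?sum_expR_Atheta_gt0.
Qed.

Lemma Atheta_adjoint (z : 'M[R]_(n, k)) (theta : 'cV[R]_(p + k)) :
  \sum_(i < n) \sum_(l < k) z i l * Atheta h theta i l = dotv theta (Aapp h z).
Proof.
rewrite /dotv; symmetry; under eq_bigr => j _ do rewrite mxE mulr_sumr.
rewrite exchange_big; apply: eq_bigr => i _ /=.
under eq_bigr => j _ do rewrite mulr_sumr.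
rewrite exchange_big; apply: eq_bigr => l _ /=.
rewrite mxE mulr_sumr; apply: eq_bigr => j _; lra.
Qed.

Lemma cross_entropy_gtheta (eta : 'M[R]_(n, k)) (theta : 'cV[R]_(p + k)) :
  (forall i, \sum_(l < k) eta i l = 1) ->
  \sum_(i < n) \sum_(l < k) eta i l * ln (gtheta h theta i l) =
  dotv theta (Aapp h eta) - logpart theta.
Proof.
move=> eta_rows; rewrite -Atheta_adjoint /logpart -sumrB; apply: eq_bigr => i _.
under eq_bigr => l _ do rewrite ln_gtheta mulrBr.
by rewrite sumrB -mulr_suml eta_rows mul1r.
Qed.

Variables (eta : 'M[R]_(n, k)) (b eps : 'cV[R]_(p + k)).
Hypothesis eta_rows : forall i, \sum_(l < k) eta i l = 1.
Hypothesis eps_ge0 : forall j, 0 <= eps j 0.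

Lemma FobjE (theta : 'cV[R]_(p + k)) :
  Fobj h eta b eps theta =
  logpart theta - \sum_j (theta j 0 * b j 0 - `|theta j 0| * eps j 0).
Proof.
rewrite /Fobj cross_entropy_gtheta //.
suff : dotv (Aapp h eta - (b - eps)) (posp theta)
          + dotv (b + eps - Aapp h eta) (negp theta)
        = dotv theta (Aapp h eta) - \sum_j (theta j 0 * b j 0 - `|theta j 0| * eps j 0).
  by lra.
rewrite /dotv -big_split -sumrB /=; apply: eq_bigr => j _.
rewrite !mxE -max0_add; have := max0_sub (theta j 0).
set tp := Num.max _ 0; set tm := Num.max _ 0 => <-; ring.
Qed.

Lemma DdualE (s s' : 'cV[R]_(p + k)) :
  Ddual h b eps s s' =
  \sum_j ((s' j 0 - s j 0) * b j 0 - (s' j 0 + s j 0) * eps j 0) - logpart (s' - s).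
Proof. by rewrite /Ddual /dotv -sumrB; congr (_ - _); apply: eq_bigr => j _; rewrite !mxE. Qed.

Lemma Ddual_le_Fobj (s s' : 'cV[R]_(p + k)) : nonneg_vec s -> nonneg_vec s' ->
  Ddual h b eps s s' <= - Fobj h eta b eps (s' - s).
Proof.
move=> s_ge0 s'_ge0; rewrite DdualE FobjE opprB lerD2r.
apply: ler_sum => j _; rewrite !mxE.
have := normB_le_add _ _ (s_ge0 j) (s'_ge0 j); have := eps_ge0 j; nra.
Qed.

Lemma Ddual_negp_posp (theta : 'cV[R]_(p + k)) :
  Ddual h b eps (negp theta) (posp theta) = - Fobj h eta b eps theta.
Proof.
have posp_sub_negp : posp theta - negp theta = theta.
  by apply/colP => j; rewrite !mxE max0_sub.
rewrite DdualE FobjE opprB posp_sub_negp; congr (_ - _).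
by apply: eq_bigr => j _; rewrite !mxE max0_sub max0_add.
Qed.

Let Fvals := [set (Fobj h eta b eps theta)%:E | theta in [set: 'cV[R]_(p + k)]]%classic.

Lemma posp_ge0 (theta : 'cV[R]_(p + k)) : nonneg_vec (posp theta).
Proof. by move=> j; rewrite mxE max0_ge0. Qed.

Lemma negp_ge0 (theta : 'cV[R]_(p + k)) : nonneg_vec (negp theta).
Proof. by move=> j; rewrite mxE max0_ge0. Qed.

Lemma oppe_Vval : (- Vval h b eps)%E = ereal_inf Fvals.
Proof.
congr (- _)%E; apply/eqP; rewrite eq_le; apply/andP; split.
- apply: ge_ereal_sup => _ [s s_ge0 [s' s'_ge0 <-]].
  apply: le_ereal_sup_tmp; exists (- (Fobj h eta b eps (s' - s))%:E)%E.
    by exists (Fobj h eta b eps (s' - s))%:E => //; exists (s' - s).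
  by rewrite lee_fin Ddual_le_Fobj.
- apply: ge_ereal_sup => _ [_ [theta _ <-] <-].
  apply: le_ereal_sup_tmp; exists (Ddual h b eps (negp theta) (posp theta))%:E.
    by exists (negp theta); [exact: negp_ge0 | exists (posp theta); first exact: posp_ge0].
  by rewrite Ddual_negp_posp.
Qed.

Lemma Fobj_attains_inf (s s' : 'cV[R]_(p + k)) : nonneg_vec s -> nonneg_vec s' ->
  (Ddual h b eps s s')%:E = Vval h b eps ->
  (Fobj h eta b eps (s' - s))%:E = ereal_inf Fvals.
Proof.
move=> s_ge0 s'_ge0 s_opt; apply/eqP; rewrite eq_le; apply/andP; split.
- by rewrite -oppe_Vval -s_opt lee_fin lerNr Ddual_le_Fobj.
- by apply: ereal_inf_lbound; exists (s' - s).
Qed.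

End Duality.

Section RowMajorIndex.
Variables m k : nat.

Lemma row_major_lt (j : 'I_m) (l : 'I_k) : (j * k + l < m * k)%N.
Proof.
rewrite (leq_trans (_ : _ < j * k + k)%N) ?ltn_add2l //.
by rewrite -mulSnr leq_mul2r ltn_ord orbT.
Qed.

Definition row_major (j : 'I_m) (l : 'I_k) : 'I_(m * k) := Ordinal (row_major_lt j l).

Lemma ordq_row_major j l : ordq (row_major j l) = j.
Proof.
by apply: val_inj; rewrite /= divnMDl ?divn_small ?addn0 // (leq_ltn_trans _ (ltn_ord l)).
Qed.

Lemma ordr_row_major j l : ordr (row_major j l) = l.
Proof. by apply: val_inj; rewrite /= modnMDl modn_small. Qed.

Lemma sum_row_major (V : nmodType) (F : 'I_(m * k) -> V) :
  \sum_(t < m * k) F t = \sum_(j < m) \sum_(l < k) F (row_major j l).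
Proof.
rewrite pair_big (reindex (fun jl : 'I_m * 'I_k => row_major jl.1 jl.2)) //=.
exists (fun t => (ordq t, ordr t)) => [[j l] _ | t _] /=.
  by rewrite ordq_row_major ordr_row_major.
by apply: val_inj; rewrite /= -divn_eq.
Qed.

End RowMajorIndex.

Section SoftmaxBlocks.
Variables (R : realType) (n k p : nat) (h : 'I_p -> 'I_n -> option 'I_k).

Lemma Ablock_trmx_mul (theta : 'cV[R]_(p + k)) i :
  (Ablock R h i)^T *m theta = Tmat theta *m xhat R h i.
Proof.
apply/colP => l; rewrite !mxE sum_row_major; apply: eq_bigr => j _.
rewrite (bigD1 l) //= big1 => [|l' l'l].
  by rewrite !mxE ordq_row_major ordr_row_major eqxx mulr1 mulrC addr0.
by rewrite !mxE ordr_row_major (negbTE l'l) mulr0 mul0r.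
Qed.

Lemma Atheta_Ablock (theta : 'cV[R]_(p + k)) i l :
  Atheta h theta i l = ((Ablock R h i)^T *m theta) l 0.
Proof. by rewrite !mxE; apply: eq_bigr => j _; rewrite !mxE mulrC. Qed.

Lemma gtheta_softmax (theta : 'cV[R]_(p + k)) i l :
  gtheta h theta i l = softmax (Tmat theta *m xhat R h i) l 0.
Proof.
rewrite -Ablock_trmx_mul [LHS]mxE [RHS]mxE Atheta_Ablock; congr (_ / _).
by apply: eq_bigr => l' _; rewrite Atheta_Ablock.
Qed.

End SoftmaxBlocks.

Theorem lemma1 (R : realType) (n k p : nat)
  (Hn : (1 <= n)%N) (Hk : (2 <= k)%N) (Hp : (1 <= p)%N)
  (h : 'I_p -> 'I_n -> option 'I_k)
  (Hnj : forall j : 'I_p, (1 <= nrule h j)%N)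
  (eta : 'M[R]_(n, k)) (Heta : in_simplex_n eta)
  (b eps : 'cV[R]_(p + k))
  (Heps : forall j, 0 <= eps j 0)
  (Hlo : forall j, b j 0 - eps j 0 <= Aapp h eta j 0)
  (Hhi : forall j, Aapp h eta j 0 <= b j 0 + eps j 0) :
  (- Vval h b eps = ereal_inf [set (Fobj h eta b eps theta)%:E | theta in [set: 'cV[R]_(p + k)]])%E
  /\ (forall j, 0 <= (Aapp h eta - (b - eps)) j 0)
  /\ (forall j, 0 <= (b + eps - Aapp h eta) j 0)
  /\ (forall sigma sigma' : 'cV[R]_(p + k),
        nonneg_vec sigma -> nonneg_vec sigma' ->
        (Ddual h b eps sigma sigma')%:E = Vval h b eps ->
        (Fobj h eta b eps (sigma' - sigma))%:E =
          ereal_inf [set (Fobj h eta b eps theta)%:E | theta in [set: 'cV[R]_(p + k)]])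
  /\ (forall (theta : 'cV[R]_(p + k)) (i : 'I_n),
        (Ablock R h i)^T *m theta = Tmat theta *m xhat R h i
        /\ (forall l : 'I_k, gtheta h theta i l = softmax (Tmat theta *m xhat R h i) l 0)).
Proof.
have k_gt0 : (0 < k)%N by apply: leq_trans Hk.
have [_ eta_rows] := Heta.
split; first exact: (@oppe_Vval R n k p h k_gt0 eta b eps eta_rows Heps).
split; first by move=> j; move: (Hlo j); rewrite !mxE subr_ge0.
split; first by move=> j; move: (Hhi j); rewrite !mxE subr_ge0.
split; first by move=> s s'; apply: Fobj_attains_inf.
by move=> theta i; split=> [|l]; [exact: Ablock_trmx_mul | exact: gtheta_softmax].
Qed.
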